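(* For every $m\ge1$ and every $0\le s\le m$, $$\tilde G_s(m,\{\lambda_l\}|\{\xi_k\})=\frac{1}{\sin^m\zeta}\,Z_m(\{\lambda_l\}|\{\xi_k\}).$$ In particular $\tilde G_s$ does not depend on $s$, and equivalently $$G_s(m,\{\lambda\}|\{\xi\})=\frac{1}{s!(m-s)!\,\sin^m\zeta}\,\Theta^s_m(\lambda_1,\dots,\lambda_m)\,Z_m(\{\lambda\}|\{\xi\}).$$
   Context: Fix $\zeta\in(0,\pi)$. For integers $m\ge1$, $0\le s\le m$, set $\epsilon_j=-\tfrac12$ for $j\le s$ and $\epsilon_j=+\tfrac12$ for $j>s$ ($\epsilon_j$ attached to $\lambda_j$). Define $$G_s(m,\{\lambda_j\}|\{\xi_k\})=\frac{1}{s!(m-s)!}\sum_{\sigma\in S_m}(-1)^{[\sigma]}\prod_{1\le k<j\le m}\frac{\sinh(\lambda_{\sigma(j)}-\xi_k+i\epsilon_{\sigma(j)}\zeta)\,\sinh(\lambda_{\sigma(k)}-\xi_j-i\epsilon_{\sigma(k)}\zeta)}{\sinh(\lambda_{\sigma(j)}-\lambda_{\sigma(k)}+i(\epsilon_{\sigma(j)}+\epsilon_{\sigma(k)})\zeta)}$$ ($(-1)^{[\sigma]}$ the sign of $\sigma$), and $\tilde G_s$ by $$G_s=\frac{1}{s!(m-s)!}\prod_{1\le k<j\le m}\frac{\sinh(\lambda_j-\lambda_k)}{\sinh(\lambda_j-\lambda_k+i(\epsilon_j+\epsilon_k)\zeta)\,\sinh(\lambda_j-\lambda_k-i(\epsilon_j+\epsilon_k)\zeta)}\;\tilde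 G_s.$$ The (inhomogeneous six-vertex domain-wall) partition function is $$Z_m(\{\lambda\}|\{\xi\})=\frac{\prod_{j,k=1}^m\sinh(\lambda_j-\xi_k+i\frac\zeta2)\sinh(\lambda_j-\xi_k-i\frac\zeta2)}{\prod_{1\le k<j\le m}\sinh(\lambda_j-\lambda_k)\sinh(\xi_k-\xi_j)}\det_m\mathcal M,\qquad \mathcal M_{jk}=\frac{\sin\zeta}{\sinh(\lambda_j-\xi_k+i\frac\zeta2)\sinh(\lambda_j-\xi_k-i\frac\zeta2)},$$ and $$\Theta^s_m(\lambda_1,\dots,\lambda_m)=\prod_{k=1}^s\prod_{j=s+1}^m\frac1{\sinh(\lambda_j-\lambda_k)}\prod_{m\ge j>k>s}\frac{\sinh(\lambda_j-\lambda_k)}{\sinh(\lambda_j-\lambda_k+i\zeta)\sinh(\lambda_j-\lambda_k-i\zeta)}\prod_{s\ge j>k\ge1}\frac{\sinh(\lambda_j-\lambda_k)}{\sinh(\lambda_j-\lambda_k+i\zeta)\sinh(\lambda_j-\lambda_k-i\zeta)}.$$ All identities are between meromorphic functions. *)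

From HB Require Import structures.
From mathcomp Require Import all_boot all_order all_algebra all_fingroup.
From mathcomp Require Import complex.
From mathcomp Require Import reals sequences exp trigo.
Set Implicit Arguments. Unset Strict Implicit. Unset Printing Implicit Defensive.
Import Order.TTheory GRing.Theory Num.Theory.
Local Open Scope ring_scope.
Local Open Scope complex_scope.

Section Defs.
Variable R : realType.
Local Notation C := (R[i]).

Definition cexp (z : C) : C :=
  let: a +i* b := z in (expR a * cos b) +i* (expR a * sin b).

Definition csinh (z : C) : C := (cexp z - cexp (- z)) / 2%:R.

Definition imag (t : R) : C := 0 +i* t.

(* epsilon_j (0-indexed j): -1/2 for j < s (i.e. 1-indexed j <= s), +1/2 otherwise *)
Definition eps (s : nat) {m : nat} (j : 'I_m) : R :=
  if (j < s)%N then - (1 / 2%:R) else 1 / 2%:R.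

Definition Gfun (zeta : R) (m s : nat) (lam xi : 'I_m -> C) : C :=
  ((s`! * (m - s)`!)%:R)^-1 *
  \sum_(sg : 'S_m) (-1) ^+ (odd_perm sg) *
    \prod_(k : 'I_m) \prod_(j : 'I_m | (k < j)%N)
      (csinh (lam (sg j) - xi k + imag (eps s (sg j) * zeta)) *
       csinh (lam (sg k) - xi j - imag (eps s (sg k) * zeta)) /
       csinh (lam (sg j) - lam (sg k) + imag ((eps s (sg j) + eps s (sg k)) * zeta))).

Definition Gpref (zeta : R) (m s : nat) (lam : 'I_m -> C) : C :=
  ((s`! * (m - s)`!)%:R)^-1 *
  \prod_(k : 'I_m) \prod_(j : 'I_m | (k < j)%N)
    (csinh (lam j - lam k) /
     (csinh (lam j - lam k + imag ((eps s j + eps s k) * zeta)) *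
      csinh (lam j - lam k - imag ((eps s j + eps s k) * zeta)))).

(* tilde G_s, determined by G_s = Gpref * tilde G_s (Gpref is nonzero at generic points) *)
Definition Gtilde (zeta : R) (m s : nat) (lam xi : 'I_m -> C) : C :=
  Gfun zeta s lam xi / Gpref zeta s lam.

Definition Mmat (zeta : R) (m : nat) (lam xi : 'I_m -> C) : 'M[C]_m :=
  \matrix_(j, k) ((sin zeta)%:C /
     (csinh (lam j - xi k + imag (zeta / 2%:R)) *
      csinh (lam j - xi k - imag (zeta / 2%:R)))).

Definition Zfun (zeta : R) (m : nat) (lam xi : 'I_m -> C) : C :=
  (\prod_(j : 'I_m) \prod_(k : 'I_m)
      (csinh (lam j - xi k + imag (zeta / 2%:R)) *
       csinh (lam j - xi k - imag (zeta / 2%:R)))) /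
  (\prod_(k : 'I_m) \prod_(j : 'I_m | (k < j)%N)
      (csinh (lam j - lam k) * csinh (xi k - xi j))) *
  \det (Mmat zeta lam xi).

Definition Theta (zeta : R) (m s : nat) (lam : 'I_m -> C) : C :=
  (\prod_(k : 'I_m | (k < s)%N) \prod_(j : 'I_m | (s <= j)%N)
      (csinh (lam j - lam k))^-1) *
  (\prod_(k : 'I_m | (s <= k)%N) \prod_(j : 'I_m | (k < j)%N)
      (csinh (lam j - lam k) /
       (csinh (lam j - lam k + imag zeta) * csinh (lam j - lam k - imag zeta)))) *
  (\prod_(k : 'I_m) \prod_(j : 'I_m | (k < j)%N && (j < s)%N)
      (csinh (lam j - lam k) /
       (csinh (lam j - lam k + imag zeta) * csinh (lam j - lam k - imag zeta)))).

End Defs.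

From HB Require Import structures.
From mathcomp Require Import all_boot all_order all_algebra all_fingroup.
From mathcomp Require Import complex.
From mathcomp Require Import reals sequences exp trigo.
From mathcomp Require Import ring.
From mathcomp Require boolp.
Set Implicit Arguments. Unset Strict Implicit. Unset Printing Implicit Defensive.
Import Order.TTheory GRing.Theory Num.Theory.
Local Open Scope ring_scope.
Local Open Scope complex_scope.

(* With mu_j = lam_j + i eps_j zeta and nu_j = lam_j - i eps_j zeta, the sum
   defining G_s is an alternating sum N over permutations divided by a product
   W that does not depend on the permutation, and Theta_m^s is the same
   quotient of W with the Vandermonde-type product of the sinh (lam_j - lam_k);
   the determinant in Z_m is, up to sin^m zeta, the determinant D of
   [prod_(l <> j) sinh (mu_l - xi_k) sinh (nu_l - xi_k)]_(j,k).  Everything thus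
   reduces to N * prod_(k < j) sinh (xi_k - xi_j) = D, proved by induction on m:
   as functions of the last inhomogeneity x = xi_m, both sides are Laurent
   polynomials in e^x of degree 2m and fixed parity, and they agree at the 2m+1
   points x = nu_b (by the induction hypothesis) and x = xi_k, k < m (where
   both vanish), which genericity makes pairwise distinct modulo i pi. *)

Section ComplexSinh.
Variable R : realType.
Local Notation C := R[i].

Lemma cexpD (a b : C) : cexp (a + b) = cexp a * cexp b.
Proof.
case: a => a1 a2; case: b => b1 b2; rewrite /cexp /= expRD cosD sinD.
by apply/eqP; rewrite eq_complex /=; apply/andP; split; apply/eqP; ring.
Qed.

Lemma cexp0 : cexp 0 = 1 :> C.
Proof. by rewrite /cexp /= expR0 cos0 sin0 !mul1r. Qed.

Lemma cexp_neq0 (a : C) : cexp a != 0.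
Proof.
apply/eqP => ea0; have := cexpD a (- a).
by rewrite subrr cexp0 ea0 mul0r => /eqP; rewrite oner_eq0.
Qed.

Lemma cexpN (a : C) : cexp (- a) = (cexp a)^-1.
Proof.
apply: (mulfI (cexp_neq0 a)).
by rewrite -cexpD subrr cexp0 divff // cexp_neq0.
Qed.

Lemma csinh0 : csinh 0 = 0 :> C.
Proof. by rewrite /csinh oppr0 subrr mul0r. Qed.

Lemma csinhN (a : C) : csinh (- a) = - csinh a.
Proof. by rewrite /csinh opprK -mulNr opprB. Qed.

Lemma csinhB (a x : C) :
  csinh (a - x) = (cexp x)^-1 * (cexp a / 2%:R - (cexp a)^-1 / 2%:R * cexp x ^+ 2).
Proof.
rewrite /csinh opprB !cexpD !cexpN.
by field; rewrite !cexp_neq0.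
Qed.

Lemma csinhB_neq0 (a b : C) : csinh (a - b) != 0 -> cexp a ^+ 2 != cexp b ^+ 2.
Proof.
apply: contra => /eqP eab; rewrite csinhB -eab.
by rewrite expr2 mulrAC mulrA mulVf ?cexp_neq0 // mul1r subrr mulr0.
Qed.

(* [trigpoly n f]: [f x] is a combination of [e^(kx)], [k = -n, -n+2, ..., n]. *)
Definition trigpoly (n : nat) (f : C -> C) :=
  exists2 p : {poly C}, (size p <= n.+1)%N &
    forall x, f x = (cexp x ^+ n)^-1 * p.[cexp x ^+ 2].

Lemma trigpoly_ext n (f g : C -> C) : f =1 g -> trigpoly n f -> trigpoly n g.
Proof. by move=> efg [p sp fE]; exists p => // x; rewrite -efg. Qed.

Lemma trigpoly_cst (c : C) : trigpoly 0 (fun _ => c).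
Proof.
exists c%:P; first exact: size_polyC_leq1.
by move=> x; rewrite hornerC expr0 invr1 mul1r.
Qed.

Lemma trigpoly_csinhB (a : C) : trigpoly 1 (fun x => csinh (a - x)).
Proof.
exists ((cexp a / 2%:R)%:P - ((cexp a)^-1 / 2%:R) *: 'X).
  rewrite (leq_trans (size_polyD _ _)) // geq_max size_polyN.
  by rewrite (leq_trans (size_polyC_leq1 _)) // (leq_trans (size_scale_leq _ _)) ?size_polyX.
by move=> x; rewrite csinhB hornerD hornerN hornerC hornerZ hornerX expr1.
Qed.

Lemma trigpolyM n k (f g : C -> C) :
  trigpoly n f -> trigpoly k g -> trigpoly (n + k) (fun x => f x * g x).
Proof.
move=> [p sp fE] [q sq gE]; exists (p * q).
  rewrite (leq_trans (size_mul_leq _ _)) // -subn1 leq_subLR add1n.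
  by rewrite -addnS -addSn leq_add.
by move=> x; rewrite fE gE hornerM exprD invfM; ring.
Qed.

Lemma trigpolyB n (f g : C -> C) :
  trigpoly n f -> trigpoly n g -> trigpoly n (fun x => f x - g x).
Proof.
move=> [p sp fE] [q sq gE]; exists (p - q).
  by rewrite (leq_trans (size_polyD _ _)) // size_polyN geq_max sp sq.
by move=> x; rewrite fE gE hornerD hornerN mulrBr.
Qed.

Lemma trigpolyZ n (c : C) (f : C -> C) : trigpoly n f -> trigpoly n (fun x => c * f x).
Proof.
move=> [p sp fE]; exists (c *: p); first exact: leq_trans (size_scale_leq _ _) sp.
by move=> x; rewrite fE hornerZ mulrCA.
Qed.

Lemma trigpoly_sum (I : Type) (r : seq I) (P : pred I) n (F : I -> C -> C) :
  (forall i, P i -> trigpoly n (F i)) ->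
  trigpoly n (fun x => \sum_(i <- r | P i) F i x).
Proof.
move=> trigF; elim: r => [|i r IHr].
  by exists 0 => [|x]; rewrite ?size_poly0 ?big_nil ?horner0 ?mulr0.
case Pi: (P i); last by apply: trigpoly_ext IHr => x; rewrite big_cons Pi.
have [p sp FE] := trigF i Pi; have [q sq sumE] := IHr.
exists (p + q) => [|x]; first by rewrite (leq_trans (size_polyD _ _)) // geq_max sp sq.
by rewrite big_cons Pi FE sumE hornerD mulrDr.
Qed.

Lemma trigpoly_prod (I : Type) (r : seq I) (P : pred I) (d : I -> nat)
    (F : I -> C -> C) :
  (forall i, P i -> trigpoly (d i) (F i)) ->
  trigpoly (\sum_(i <- r | P i) d i) (fun x => \prod_(i <- r | P i) F i x).
Proof.
move=> trigF; elim: r => [|i r IHr].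
  by rewrite big_nil; apply: trigpoly_ext (trigpoly_cst 1) => x; rewrite big_nil.
rewrite big_cons; case Pi: (P i); last by apply: trigpoly_ext IHr => x; rewrite big_cons Pi.
by apply: trigpoly_ext (trigpolyM (trigF i Pi) IHr) => x; rewrite big_cons Pi.
Qed.

Lemma trigpoly_eq0 n (f : C -> C) (zs : seq C) :
  trigpoly n f -> size zs = n.+1 -> uniq [seq cexp z ^+ 2 | z <- zs] ->
  {in zs, forall z, f z = 0} -> forall x, f x = 0.
Proof.
move=> [p sp fE] size_zs uniq_zs f_zs.
suff p0 : p = 0 by move=> x; rewrite fE p0 horner0 mulr0.
apply: (@roots_geq_poly_eq0 _ _ [seq cexp z ^+ 2 | z <- zs]) => //; last first.
  by rewrite size_map size_zs.
apply/allP => _ /mapP [z zs_z ->]; apply/eqP.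
move: (f_zs z zs_z); rewrite fE => /eqP.
by rewrite mulf_eq0 invr_eq0 expf_eq0 (negPf (cexp_neq0 z)) andbF => /eqP.
Qed.

End ComplexSinh.

Lemma lift_perm_inj n (i j : 'I_n.+1) : injective (lift_perm i j).
Proof.
move=> s t est; apply/permP => k; apply: (@lift_inj _ j).
by rewrite -!(lift_perm_lift i) est.
Qed.

Lemma lift_permP n (i j : 'I_n.+1) (s : 'S_n.+1) :
  s i = j -> exists t, s = lift_perm i j t.
Proof.
move=> sij; pose f k := odflt k (unlift j (s (lift i k))).
have liftf k : lift j (f k) = s (lift i k).
  have : j != s (lift i k) by rewrite -sij (inj_eq perm_inj) neq_lift.
  by rewrite /f => /unlift_some [k' sk ->]; rewrite sk.
have inj_f : injective f.
  by move=> k1 k2 /(congr1 (lift j)); rewrite !liftf => /perm_inj /lift_inj.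
exists (perm inj_f); apply/permP => k; case: (unliftP i k) => [k'|] ->.
  by rewrite lift_perm_lift permE liftf.
by rewrite lift_perm_id.
Qed.

Section BigPerm.
Variables (T : Type) (idx : T) (op : Monoid.com_law idx).

Lemma big_perm_fixing n (i j : 'I_n.+1) (F : 'S_n.+1 -> T) :
  \big[op/idx]_(s : 'S_n.+1 | s i == j) F s = \big[op/idx]_(t : 'S_n) F (lift_perm i j t).
Proof.
transitivity (\big[op/idx]_(s in [set lift_perm i j t | t : 'S_n]) F s).
  apply: eq_bigl => s; apply/eqP/imsetP => [/lift_permP [t ->] | [t _ ->]].
    by exists t.
  exact: lift_perm_id.
by rewrite big_imset // => s t _ _; apply: lift_perm_inj.
Qed.

Lemma big_neq_lift n (j : 'I_n.+1) (F : 'I_n.+1 -> T) :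
  \big[op/idx]_(i | i != j) F i = \big[op/idx]_(i < n) F (lift j i).
Proof.
rewrite big_mkcond (bigD1_ord j) //= eqxx Monoid.mul1m.
by apply: eq_bigr => i _; rewrite eq_sym neq_lift.
Qed.

Definition pair_perm n (s : 'S_n) (p : 'I_n * 'I_n) : 'I_n * 'I_n :=
  if (p.1 < p.2)%N == (s p.1 < s p.2)%N then (s p.1, s p.2) else (s p.2, s p.1).

Lemma pair_permK n (s : 'S_n) : cancel (pair_perm s) (pair_perm s^-1).
Proof.
move=> [a b]; rewrite /pair_perm /=.
case E: ((a < b)%N == (s a < s b)%N) => /=; first by rewrite !permK eq_sym E.
rewrite !permK; suff -> : ((s b < s a)%N == (b < a)%N) = false by [].
move: E; case: (ltngtP a b); case: (ltngtP (s a) (s b)) => //.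
  by move=> /val_inj /perm_inj ->; rewrite ltnn.
by move=> + /val_inj eab; rewrite eab ltnn.
Qed.

Lemma big_pairs_perm n (g : 'I_n -> 'I_n -> T) (s : 'S_n) :
  (forall a b, g a b = g b a) ->
  \big[op/idx]_(k : 'I_n) \big[op/idx]_(j : 'I_n | (k < j)%N) g (s j) (s k) =
  \big[op/idx]_(k : 'I_n) \big[op/idx]_(j : 'I_n | (k < j)%N) g j k.
Proof.
move=> gC; rewrite !pair_big_dep /=.
rewrite [RHS](reindex_inj (can_inj (pair_permK s))) /=.
apply: eq_big => [[a b]|[a b]] /=; rewrite /pair_perm /=.
  case: ifP => [/eqP //|]; case: (ltngtP a b); case: (ltngtP (s a) (s b)) => //.
  by move=> /val_inj /perm_inj ->; rewrite ltnn.
by case: ifP => // _ _; apply: gC.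
Qed.

Lemma big_pairs_ord_max m (H : 'I_m.+1 -> 'I_m.+1 -> T) :
  \big[op/idx]_(k : 'I_m.+1) \big[op/idx]_(j : 'I_m.+1 | (k < j)%N) H k j =
  op (\big[op/idx]_(k : 'I_m) H (lift ord_max k) ord_max)
     (\big[op/idx]_(k : 'I_m) \big[op/idx]_(j : 'I_m | (k < j)%N)
        H (lift ord_max k) (lift ord_max j)).
Proof.
rewrite (bigD1_ord ord_max) //= big_pred0 => [|j]; last by rewrite ltnNge -ltnS ltn_ord.
have bump_ord (i : 'I_m) : bump m i = i by rewrite /bump leqNgt ltn_ord.
rewrite Monoid.mul1m -big_split /=; apply: eq_bigr => k _.
rewrite (bigD1_ord ord_max) /= bump_ord ?ltn_ord //.
by apply: congr1; apply: eq_bigl => j /=; rewrite bump_ord.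
Qed.

End BigPerm.

Section SinhDeterminant.
Variable R : realType.
Local Notation C := R[i].

Definition sinh_altsum m (mu nu xi : 'I_m -> C) : C :=
  \sum_(s : 'S_m) (-1) ^+ s *
    \prod_(k : 'I_m) \prod_(j : 'I_m | (k < j)%N)
      (csinh (mu (s j) - xi k) * csinh (nu (s k) - xi j) * csinh (nu (s j) - mu (s k))).

Definition sinh_vdm m (xi : 'I_m -> C) : C :=
  \prod_(k : 'I_m) \prod_(j : 'I_m | (k < j)%N) csinh (xi k - xi j).

Definition sinh_mx m (mu nu xi : 'I_m -> C) : 'M[C]_m :=
  \matrix_(j, k) \prod_(l : 'I_m | l != j) (csinh (mu l - xi k) * csinh (nu l - xi k)).

Definition sinh_generic m (nu xi : 'I_m -> C) :=
  [/\ forall a b, a != b -> csinh (nu a - nu b) != 0,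
      forall a k, csinh (nu a - xi k) != 0 &
      forall a b, a != b -> csinh (xi a - xi b) != 0].

Definition set_last m (xi : 'I_m.+1 -> C) (x : C) : 'I_m.+1 -> C :=
  fun k => if k == ord_max then x else xi k.

Lemma set_last_max m (xi : 'I_m.+1 -> C) x : set_last xi x ord_max = x.
Proof. by rewrite /set_last eqxx. Qed.

Lemma set_last_lift m (xi : 'I_m.+1 -> C) x k :
  set_last xi x (lift ord_max k) = xi (lift ord_max k).
Proof. by rewrite /set_last eq_sym (negPf (neq_lift _ _)). Qed.

Lemma set_last_id m (xi : 'I_m.+1 -> C) : set_last xi (xi ord_max) = xi.
Proof. by apply: boolp.funext => k; rewrite /set_last; case: eqP => [->|]. Qed.

Lemma sinh_generic_lift m (nu xi : 'I_m.+1 -> C) (b : 'I_m.+1) :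
  sinh_generic nu xi -> sinh_generic (nu \o lift b) (xi \o lift ord_max).
Proof.
case=> nu_nu nu_xi xi_xi; split=> [a c ac | a k | a c ac] /=; last 2 first.
- exact: nu_xi.
- by apply: xi_xi; rewrite (inj_eq lift_inj).
by apply: nu_nu; rewrite (inj_eq lift_inj).
Qed.

Lemma trigpoly_prod_pairs m (H : C -> 'I_m.+1 -> 'I_m.+1 -> C) :
  (forall k, trigpoly 1 (fun x => H x (lift ord_max k) ord_max)) ->
  (forall k j, trigpoly 0 (fun x => H x (lift ord_max k) (lift ord_max j))) ->
  trigpoly m (fun x => \prod_(k : 'I_m.+1) \prod_(j : 'I_m.+1 | (k < j)%N) H x k j).
Proof.
move=> trig_max trig_lift.
have deg_m : (\sum_(k < m) 1 + \sum_(k < m) \sum_(j < m | (k < j)%N) 0)%N = m.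
  by rewrite sum1_card card_ord big1 ?addn0 // => k _; apply: big1.
rewrite -{1}deg_m.
apply: trigpoly_ext (trigpolyM (trigpoly_prod _ _) (trigpoly_prod _ _)).
- by move=> x; rewrite big_pairs_ord_max.
- by move=> k _; apply: trig_max.
by move=> k _; apply: trigpoly_prod => j _; apply: trig_lift.
Qed.

Lemma trigpoly_sinh_altsum m (mu nu xi : 'I_m.+1 -> C) :
  trigpoly m (fun x => sinh_altsum mu nu (set_last xi x)).
Proof.
apply: trigpoly_sum => s _; apply: trigpolyZ; apply: trigpoly_prod_pairs => [k|k j].
  apply: trigpoly_ext (trigpolyM (trigpolyM (trigpoly_cst _) (trigpoly_csinhB _))
                                 (trigpoly_cst (csinh (nu (s ord_max) - mu (s (lift ord_max k))))));
  by move=> x /=; rewrite set_last_lift set_last_max.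
apply: trigpoly_ext (trigpoly_cst _) => x /=.
by rewrite !set_last_lift.
Qed.

Lemma trigpoly_sinh_vdm m (xi : 'I_m.+1 -> C) :
  trigpoly m (fun x => sinh_vdm (set_last xi x)).
Proof.
apply: trigpoly_prod_pairs => [k|k j].
  by apply: trigpoly_ext (trigpoly_csinhB _) => x; rewrite set_last_lift set_last_max.
by apply: trigpoly_ext (trigpoly_cst _) => x; rewrite !set_last_lift.
Qed.

Lemma trigpoly_det_sinh_mx m (mu nu xi : 'I_m.+1 -> C) :
  trigpoly (m + m) (fun x => \det (sinh_mx mu nu (set_last xi x))).
Proof.
have cofactorE x i : cofactor (sinh_mx mu nu (set_last xi x)) i ord_max =
                     cofactor (sinh_mx mu nu xi) i ord_max.
  rewrite /cofactor; congr (_ * \det _); apply/matrixP => a b; rewrite !mxE.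
  by apply: eq_bigr => l _; rewrite set_last_lift.
apply: (trigpoly_ext (f := fun x => \sum_i cofactor (sinh_mx mu nu xi) i ord_max *
    \prod_(l : 'I_m.+1 | l != i) (csinh (mu l - x) * csinh (nu l - x)))).
  move=> x; rewrite (expand_det_col _ ord_max); apply: eq_bigr => i _.
  by rewrite cofactorE mxE set_last_max [RHS]mulrC.
apply: trigpoly_sum => i _; apply: trigpolyZ.
have deg_i : (\sum_(l : 'I_m.+1 | l != i) (1 + 1))%N = (m + m)%N.
  by rewrite sum_nat_const cardC1 card_ord /= muln2 addnn.
rewrite -deg_i; apply: trigpoly_prod => l _.
exact: trigpolyM (trigpoly_csinhB _) (trigpoly_csinhB _).
Qed.

Lemma sinh_vdm_set_last m (xi : 'I_m.+1 -> C) x :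
  sinh_vdm (set_last xi x) =
  \prod_(k : 'I_m) csinh (xi (lift ord_max k) - x) * sinh_vdm (xi \o lift ord_max).
Proof.
rewrite /sinh_vdm big_pairs_ord_max; congr (_ * _).
  by apply: eq_bigr => k _; rewrite set_last_lift set_last_max.
by apply: eq_bigr => k _; apply: eq_bigr => j _; rewrite !set_last_lift.
Qed.

Lemma sinh_vdm_set_last_node m (xi : 'I_m.+1 -> C) (k : 'I_m) :
  sinh_vdm (set_last xi (xi (lift ord_max k))) = 0.
Proof.
rewrite sinh_vdm_set_last; apply/eqP; rewrite mulf_eq0; apply/orP; left.
by apply/prodf_eq0; exists k; rewrite // subrr csinh0.
Qed.

Lemma det_sinh_mx_set_last_node m (mu nu xi : 'I_m.+1 -> C) (k : 'I_m) :
  \det (sinh_mx mu nu (set_last xi (xi (lift ord_max k)))) = 0.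
Proof.
rewrite -det_tr (@determinant_alternate _ _ _ (lift ord_max k) ord_max) //.
  by rewrite eq_sym neq_lift.
by move=> j; rewrite !mxE set_last_lift set_last_max.
Qed.

Lemma sinh_altsum_set_last_nu m (mu nu xi : 'I_m.+1 -> C) (b : 'I_m.+1) :
  sinh_altsum mu nu (set_last xi (nu b)) =
  (-1) ^+ (odd m (+) odd b) * \prod_(k : 'I_m) csinh (mu b - xi (lift ord_max k)) *
  \prod_(c : 'I_m) (csinh (nu (lift b c) - nu b) * csinh (nu b - mu (lift b c))) *
  sinh_altsum (mu \o lift b) (nu \o lift b) (xi \o lift ord_max).
Proof.
rewrite /sinh_altsum (bigID (fun s : 'S_m.+1 => s ord_max == b)) /=.
rewrite [X in _ + X]big1 ?addr0 => [|s sb]; last first.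
  have s'b : (s^-1 b)%g != ord_max by apply: contra sb => /eqP <-; rewrite permKV.
  apply/eqP; rewrite mulf_eq0; apply/orP; right.
  apply/prodf_eq0; exists (s^-1 b)%g => //; apply/prodf_eq0; exists ord_max.
    by move: s'b; rewrite -(inj_eq val_inj) ltn_neqAle -ltnS ltn_ord andbT.
  by rewrite permKV set_last_max subrr csinh0 mulr0 mul0r.
rewrite big_perm_fixing big_distrr /=; apply: eq_bigr => t _.
rewrite odd_lift_perm /= big_pairs_ord_max /=.
have sinh_max : \prod_(k : 'I_m)
    (csinh (mu (lift_perm ord_max b t ord_max) - set_last xi (nu b) (lift ord_max k)) *
     csinh (nu (lift_perm ord_max b t (lift ord_max k)) - set_last xi (nu b) ord_max) *
     csinh (nu (lift_perm ord_max b t ord_max) - mu (lift_perm ord_max b t (lift ord_max k)))) =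
   \prod_(k : 'I_m) csinh (mu b - xi (lift ord_max k)) *
   \prod_(c : 'I_m) (csinh (nu (lift b c) - nu b) * csinh (nu b - mu (lift b c))).
  rewrite [X in _ = _ * X](reindex_perm t) -big_split /=; apply: eq_bigr => k _.
  by rewrite lift_perm_id lift_perm_lift set_last_lift set_last_max -mulrA.
under [X in _ * (_ * X) = _]eq_bigr => k _ do
  under eq_bigr => j _ do rewrite !lift_perm_lift !set_last_lift.
rewrite sinh_max signr_addb -!mulrA; congr (_ * _).
by rewrite mulrCA; congr (_ * _); rewrite mulrCA.
Qed.

Lemma det_sinh_mx_set_last_nu m (mu nu xi : 'I_m.+1 -> C) (b : 'I_m.+1) :
  \det (sinh_mx mu nu (set_last xi (nu b))) =
  (-1) ^+ (b + m) *
  \prod_(c : 'I_m) (csinh (mu (lift b c) - nu b) * csinh (nu (lift b c) - nu b)) *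
  \prod_(k : 'I_m) (csinh (mu b - xi (lift ord_max k)) * csinh (nu b - xi (lift ord_max k))) *
  \det (sinh_mx (mu \o lift b) (nu \o lift b) (xi \o lift ord_max)).
Proof.
rewrite (expand_det_col _ ord_max) (bigD1 b) //= big1 ?addr0 => [|i ib]; last first.
  apply/eqP; rewrite mulf_eq0 mxE; apply/orP; left; apply/prodf_eq0.
  by exists b; rewrite 1?eq_sym // set_last_max subrr csinh0 mulr0.
rewrite mxE set_last_max big_neq_lift /cofactor.
have minorE : row' b (col' ord_max (sinh_mx mu nu (set_last xi (nu b)))) =
    sinh_mx (mu \o lift b) (nu \o lift b) (xi \o lift ord_max) *m diag_mx
    (\row_k (csinh (mu b - xi (lift ord_max k)) * csinh (nu b - xi (lift ord_max k)))).
  apply/matrixP => i k; rewrite mul_mx_diag !mxE (bigD1_ord b) ?neq_lift //= set_last_lift.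
  by rewrite mulrC; congr (_ * _); apply: eq_bigl => c; rewrite (inj_eq lift_inj).
rewrite minorE det_mulmx det_diag.
under [X in _ * (_ * (_ * X)) = _]eq_bigr do rewrite mxE.
by ring.
Qed.

Lemma sinh_nodes_uniq m (nu xi : 'I_m.+1 -> C) : sinh_generic nu xi ->
  uniq [seq cexp z ^+ 2 | z <- [seq nu b | b <- enum 'I_m.+1] ++
                               [seq xi (lift ord_max k) | k <- enum 'I_m]].
Proof.
case=> nu_nu nu_xi xi_xi; rewrite map_cat cat_uniq -!map_comp; apply/and3P; split.
- rewrite map_inj_uniq ?index_enum_uniq // => a c /= eac; apply/eqP/negPn/negP => ac.
  by move: (csinhB_neq0 (nu_nu _ _ ac)); rewrite eac eqxx.
- apply/hasPn => _ /mapP [k _ ->] /=; apply/negP => /mapP [c _ /= eck].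
  by move: (csinhB_neq0 (nu_xi c (lift ord_max k))); rewrite eck eqxx.
rewrite map_inj_uniq ?index_enum_uniq // => a c /= eac; apply/eqP/negPn/negP => ac.
have lift_ac : lift ord_max a != lift ord_max c by rewrite (inj_eq lift_inj).
by move: (csinhB_neq0 (xi_xi _ _ lift_ac)); rewrite eac eqxx.
Qed.

Lemma sinh_altsum_vdm_set_last_nu m (mu nu xi : 'I_m.+1 -> C) (b : 'I_m.+1) :
  sinh_altsum (mu \o lift b) (nu \o lift b) (xi \o lift ord_max) * sinh_vdm (xi \o lift ord_max) =
    \det (sinh_mx (mu \o lift b) (nu \o lift b) (xi \o lift ord_max)) ->
  sinh_altsum mu nu (set_last xi (nu b)) * sinh_vdm (set_last xi (nu b)) =
    \det (sinh_mx mu nu (set_last xi (nu b))).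
Proof.
move=> lifted_eq.
rewrite sinh_altsum_set_last_nu sinh_vdm_set_last det_sinh_mx_set_last_nu -lifted_eq.
have -> : (-1) ^+ (odd m (+) odd b) = (-1) ^+ (b + m) :> C.
  by rewrite signr_addb !signr_odd exprD mulrC.
set A := \prod_(k < m) csinh (mu b - xi (lift ord_max k)).
set Bn := \prod_(c < m) (csinh (nu (lift b c) - nu b) * csinh (nu b - mu (lift b c))).
set Vn := \prod_(k < m) csinh (xi (lift ord_max k) - nu b).
set Bd := \prod_(c < m) (csinh (mu (lift b c) - nu b) * csinh (nu (lift b c) - nu b)).
set AV := \prod_(k < m) (csinh (mu b - _) * _).
set N := sinh_altsum _ _ _; set V := sinh_vdm _.
have sinh_swap : A * Bn * Vn = Bd * AV.
  rewrite /A /Bn /Vn /Bd /AV -!big_split; apply: eq_bigr => c _ /=.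
  by rewrite -[nu b - mu _]opprB -[xi _ - nu b]opprB !csinhN; ring.
transitivity ((-1) ^+ (b + m) * (A * Bn * Vn) * (N * V)); first by ring.
by rewrite sinh_swap; ring.
Qed.

Lemma det_sinh_mx m (mu nu xi : 'I_m -> C) :
  sinh_generic nu xi -> sinh_altsum mu nu xi * sinh_vdm xi = \det (sinh_mx mu nu xi).
Proof.
elim: m mu nu xi => [|m IHm] mu nu xi gen.
  rewrite det_mx00 /sinh_altsum /sinh_vdm big_ord0 mulr1 (big_pred1 1%g) => [|s].
    by rewrite odd_perm1 mul1r big_ord0.
  by apply/esym/eqP/permP => -[].
pose defect x := sinh_altsum mu nu (set_last xi x) * sinh_vdm (set_last xi x) -
                 \det (sinh_mx mu nu (set_last xi x)).
suff defect0 x : defect x = 0.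
  by move: (defect0 (xi ord_max)); rewrite /defect set_last_id => /eqP; rewrite subr_eq0 => /eqP.
apply: (@trigpoly_eq0 _ (m + m) _ _ _ _ (sinh_nodes_uniq gen)).
- exact: trigpolyB (trigpolyM (trigpoly_sinh_altsum _ _ _) (trigpoly_sinh_vdm _))
                   (trigpoly_det_sinh_mx _ _ _).
- by rewrite size_cat !size_map -!enumT !size_enum_ord addSn.
move=> z; rewrite mem_cat => /orP [] /mapP [a _ ->].
  apply/eqP; rewrite subr_eq0; apply/eqP; apply: sinh_altsum_vdm_set_last_nu.
  exact/IHm/sinh_generic_lift.
by rewrite /defect sinh_vdm_set_last_node det_sinh_mx_set_last_node mulr0 subrr.
Qed.

End SinhDeterminant.

Section Specialization.
Variables (R : realType) (zeta : R) (m s : nat) (lam xi : 'I_m -> R[i]).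
Local Notation C := R[i].
Hypothesis lam_generic : forall a b : 'I_m, a != b ->
  [/\ csinh (lam a - lam b) != 0,
      csinh (lam a - lam b + imag zeta) != 0,
      csinh (lam a - lam b - imag zeta) != 0 &
      csinh (xi a - xi b) != 0].
Hypothesis lam_xi_generic : forall j k : 'I_m,
  csinh (lam j - xi k + imag (zeta / 2%:R)) != 0 /\
  csinh (lam j - xi k - imag (zeta / 2%:R)) != 0.

Let hz : C := imag (zeta / 2%:R).
Let shift (j : 'I_m) : C := if (j < s)%N then - hz else hz.
Let mu (j : 'I_m) : C := lam j + shift j.
Let nu (j : 'I_m) : C := lam j - shift j.

Lemma imag_eps_shift (j : 'I_m) : imag (eps R s j * zeta) = shift j.
Proof.
rewrite /shift /eps /hz /imag; case: ifP => _; apply/eqP.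
  by rewrite eq_complex /= oppr0 eqxx /=; apply/eqP; field.
by rewrite eq_complex /= eqxx /=; apply/eqP; field.
Qed.

Lemma imag_eps_add (j k : 'I_m) :
  imag ((eps R s j + eps R s k) * zeta) = shift j + shift k.
Proof.
rewrite -!imag_eps_shift /imag; apply/eqP.
by rewrite eq_complex /= addr0 eqxx /= mulrDl.
Qed.

Lemma imag_zeta : imag zeta = hz + hz.
Proof.
by rewrite /hz /imag; apply/eqP; rewrite eq_complex /= addr0 eqxx /=; apply/eqP; field.
Qed.

Lemma ltn_neq (k j : 'I_m) : (k < j)%N -> j != k.
Proof. by move=> kj; apply/eqP => ejk; rewrite ejk ltnn in kj. Qed.

Lemma nu_xi_generic : sinh_generic nu xi.
Proof.
split=> [a b ab | a k | a b ab]; last by have [_ _ _ ->] := lam_generic ab.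
  have [h1 h2 h3 _] := lam_generic ab; rewrite /nu /shift.
  case: (a < s)%N; case: (b < s)%N; rewrite imag_zeta in h2 h3.
  - by have -> : lam a - - hz - (lam b - - hz) = lam a - lam b by ring.
  - by have -> : lam a - - hz - (lam b - hz) = lam a - lam b + (hz + hz) by ring.
  - by have -> : lam a - hz - (lam b - - hz) = lam a - lam b - (hz + hz) by ring.
  - by have -> : lam a - hz - (lam b - hz) = lam a - lam b by ring.
have [h1 h2] := lam_xi_generic a k; rewrite /nu /shift; case: (a < s)%N.
  by have -> : lam a - - hz - xi k = lam a - xi k + hz by ring.
by have -> : lam a - hz - xi k = lam a - xi k - hz by ring.
Qed.

Lemma sinh_mu_nu_neq0 a b : a != b -> csinh (mu a - nu b) != 0.
Proof.
move=> ab; have [h1 h2 h3 _] := lam_generic ab; rewrite /mu /nu /shift.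
case: (a < s)%N; case: (b < s)%N; rewrite imag_zeta in h2 h3.
- by have -> : lam a + - hz - (lam b - - hz) = lam a - lam b - (hz + hz) by ring.
- by have -> : lam a + - hz - (lam b - hz) = lam a - lam b by ring.
- by have -> : lam a + hz - (lam b - - hz) = lam a - lam b by ring.
- by have -> : lam a + hz - (lam b - hz) = lam a - lam b + (hz + hz) by ring.
Qed.

Lemma sinh_nu_mu_neq0 a b : a != b -> csinh (nu a - mu b) != 0.
Proof. by move=> ab; rewrite -opprB csinhN oppr_eq0 sinh_mu_nu_neq0 // eq_sym. Qed.

Lemma sinh_mu_nu_mul l x : csinh (mu l - x) * csinh (nu l - x) =
  csinh (lam l - x + imag (zeta / 2%:R)) * csinh (lam l - x - imag (zeta / 2%:R)).
Proof.
rewrite /mu /nu /shift -/hz; case: (l < s)%N; last by congr (csinh _ * csinh _); ring.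
by rewrite mulrC; congr (csinh _ * csinh _); ring.
Qed.

Let Lam : C := \prod_(k : 'I_m) \prod_(j : 'I_m | (k < j)%N) csinh (lam j - lam k).
Let W : C := \prod_(k : 'I_m) \prod_(j : 'I_m | (k < j)%N)
  (csinh (mu j - nu k) * csinh (nu j - mu k)).

Lemma Lam_neq0 : Lam != 0.
Proof.
apply/prodf_neq0 => k _; apply/prodf_neq0 => j kj.
by have [] := lam_generic (ltn_neq kj).
Qed.

Lemma W_neq0 : W != 0.
Proof.
apply/prodf_neq0 => k _; apply/prodf_neq0 => j kj.
by rewrite mulf_neq0 ?sinh_mu_nu_neq0 ?sinh_nu_mu_neq0 ?ltn_neq.
Qed.

Lemma sinh_vdm_neq0 : sinh_vdm xi != 0.
Proof.
apply/prodf_neq0 => k _; apply/prodf_neq0 => j kj.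
have kj' : k != j by rewrite eq_sym ltn_neq.
by have [] := lam_generic kj'.
Qed.

Lemma Zfun_sinh_altsum : Zfun zeta lam xi = (sin zeta)%:C ^+ m * sinh_altsum mu nu xi / Lam.
Proof.
pose S j k := csinh (lam j - xi k + imag (zeta / 2%:R)) *
              csinh (lam j - xi k - imag (zeta / 2%:R)).
have S_neq0 j k : S j k != 0 by have [] := lam_xi_generic j k; apply: mulf_neq0.
have det_scaled : (\prod_j \prod_k S j k) * \det (Mmat zeta lam xi) =
                  (sin zeta)%:C ^+ m * \det (sinh_mx mu nu xi).
  have -> : \prod_j \prod_k S j k = \det (diag_mx (\row_k \prod_j S j k)).
    by rewrite exchange_big det_diag; apply: eq_bigr => k _; rewrite mxE.
  rewrite mulrC -det_mulmx -detZ; congr (\det _); apply/matrixP => j k.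
  rewrite mul_mx_diag !mxE (bigD1 j) //=.
  under [in RHS]eq_bigr do rewrite sinh_mu_nu_mul.
  by rewrite -/(S j k); field; move: (S_neq0 j k); rewrite mulf_eq0 negb_or andbC.
have pairs_split : \prod_(k : 'I_m) \prod_(j : 'I_m | (k < j)%N)
    (csinh (lam j - lam k) * csinh (xi k - xi j)) = Lam * sinh_vdm xi.
  by rewrite -big_split; apply: eq_bigr => k _; rewrite big_split.
rewrite /Zfun pairs_split mulrAC det_scaled -(det_sinh_mx mu nu_xi_generic).
by field; rewrite Lam_neq0 sinh_vdm_neq0.
Qed.

Lemma Gfun_sinh_altsum :
  Gfun zeta s lam xi = ((s`! * (m - s)`!)%:R)^-1 * (sinh_altsum mu nu xi / W).
Proof.
rewrite /Gfun /sinh_altsum big_distrl /=; congr (_ * _); apply: eq_bigr => t _.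
rewrite -mulrA /W
  -(@big_pairs_perm _ _ _ _ (fun a b => csinh (mu a - nu b) * csinh (nu a - mu b)) t).
  congr (_ * _); rewrite -prodf_div; apply: eq_bigr => k _.
  rewrite -prodf_div; apply: eq_bigr => j kj.
  have tjk : t j != t k by rewrite (inj_eq perm_inj) ltn_neq.
  rewrite imag_eps_add !imag_eps_shift.
  have -> : lam (t j) - xi k + shift (t j) = mu (t j) - xi k by rewrite /mu; ring.
  have -> : lam (t k) - xi j - shift (t k) = nu (t k) - xi j by rewrite /nu; ring.
  have -> : lam (t j) - lam (t k) + (shift (t j) + shift (t k)) = mu (t j) - nu (t k).
    by rewrite /mu /nu; ring.
  by field; rewrite sinh_mu_nu_neq0 ?sinh_nu_mu_neq0.
by move=> a b; rewrite -[mu a - _]opprB -[nu a - _]opprB !csinhN mulrNN mulrC.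
Qed.

Lemma Gpref_Lam : Gpref zeta s lam = ((s`! * (m - s)`!)%:R)^-1 * (Lam / W).
Proof.
rewrite /Gpref; congr (_ * _); rewrite -prodf_div; apply: eq_bigr => k _.
rewrite -prodf_div; apply: eq_bigr => j kj.
by rewrite imag_eps_add; congr (_ / (csinh _ * csinh _)); rewrite /mu /nu; ring.
Qed.

Let pair_factor (k j : 'I_m) : C :=
  csinh (lam j - lam k) / (csinh (mu j - nu k) * csinh (nu j - mu k)).

Lemma pair_factor_same_block (k j : 'I_m) : (j < s)%N = (k < s)%N ->
  pair_factor k j = csinh (lam j - lam k) /
    (csinh (lam j - lam k + imag zeta) * csinh (lam j - lam k - imag zeta)).
Proof.
rewrite /pair_factor /mu /nu /shift imag_zeta => ->; case: (k < s)%N.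
  by rewrite [X in _ / X = _]mulrC; congr (_ / (csinh _ * csinh _)); ring.
by congr (_ / (csinh _ * csinh _)); ring.
Qed.

Lemma pair_factor_cross (k j : 'I_m) : (k < s)%N -> (s <= j)%N ->
  pair_factor k j = (csinh (lam j - lam k))^-1.
Proof.
move=> ks sj; have [lam_jk _ _ _] := lam_generic (ltn_neq (leq_trans ks sj)).
rewrite /pair_factor /mu /nu /shift ks leqNgt in sj *; rewrite (negPf sj).
have -> : lam j + hz - (lam k - - hz) = lam j - lam k by ring.
have -> : lam j - hz - (lam k + - hz) = lam j - lam k by ring.
by field.
Qed.

Lemma Theta_Lam : Theta zeta s lam = Lam / W.
Proof.
have -> : Lam / W = \prod_(k : 'I_m) \prod_(j : 'I_m | (k < j)%N) pair_factor k j.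
  by rewrite -prodf_div; apply: eq_bigr => k _; rewrite -prodf_div.
rewrite /Theta.
under [RHS]eq_bigr => k _ do rewrite (bigID (fun j : 'I_m => (j < s)%N)) /=.
rewrite [RHS]big_split /= [X in _ = _ * X](bigID (fun k : 'I_m => (k < s)%N)) /=.
rewrite [RHS]mulrC; congr (_ * _ * _).
- apply: eq_bigr => k ks; rewrite [RHS](eq_bigl (fun j : 'I_m => (s <= j)%N)) => [|j].
    by apply: eq_bigr => j sj; rewrite pair_factor_cross.
  by rewrite /= -(leqNgt s) andb_idl // => /(leq_trans ks).
- apply: eq_big => [k|k sk]; first by rewrite leqNgt.
  rewrite [RHS](eq_bigl (fun j : 'I_m => (k < j)%N)) => [|j].
    apply: eq_bigr => j kj; have sj := leq_trans sk (ltnW kj).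
    by rewrite pair_factor_same_block // !ltnNge sj sk.
  by rewrite /= -(leqNgt s) andb_idr // => /ltnW; apply: leq_trans.
apply: eq_bigr => k _; apply: eq_bigr => j /andP [kj js].
by rewrite pair_factor_same_block // js (ltn_trans kj js).
Qed.

End Specialization.

Unset Implicit Arguments. Set Strict Implicit.

Theorem mainTheorem4 (R : realType) (zeta : R) (m s : nat)
  (lam xi : 'I_m -> R[i]) :
  0 < zeta < pi -> (1 <= m)%N -> (s <= m)%N ->
  (forall a b : 'I_m, a != b ->
     [/\ csinh (lam a - lam b) != 0,
         csinh (lam a - lam b + imag zeta) != 0,
         csinh (lam a - lam b - imag zeta) != 0 &
         csinh (xi a - xi b) != 0]) ->
  (forall j k : 'I_m,
     csinh (lam j - xi k + imag (zeta / 2%:R)) != 0 /\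
     csinh (lam j - xi k - imag (zeta / 2%:R)) != 0) ->
  Gtilde zeta s lam xi = ((sin zeta)%:C ^+ m)^-1 * Zfun zeta lam xi /\
  Gfun zeta s lam xi =
    (((s`! * (m - s)`!)%:R) * (sin zeta)%:C ^+ m)^-1 *
      Theta zeta s lam * Zfun zeta lam xi.
Proof.
(* The identities hold for every [m] and [s]. *)
move=> zeta_in _ _ lam_generic lam_xi_generic.
have sin_neq0 : (sin zeta)%:C ^+ m != 0 :> R[i].
  by rewrite expf_neq0 // eq_complex /= eqxx andbT; apply/lt0r_neq0/sin_gt0_pi.
have fact_neq0 n : (n`!%:R : R[i]) != 0 by rewrite pnatr_eq0 -lt0n fact_gt0.
rewrite /Gtilde (Gfun_sinh_altsum s lam_generic) (Gpref_Lam zeta s lam).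
rewrite (Zfun_sinh_altsum s lam_generic lam_xi_generic) (Theta_Lam s lam_generic).
have := Lam_neq0 lam_generic; have := W_neq0 s lam_generic.
move: (sinh_altsum _ _ _) (\prod_(k < m) _) (\prod_(k < m) _) => N Lam W W_neq0 Lam_neq0.
by split; field; rewrite W_neq0 Lam_neq0 sin_neq0 !fact_neq0.
Qed.
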